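(* Let $j\in\mathbb{N}$. There exist surfaces in $\mathbb{P}^3(\mathbb{C})$ of degree $d=2(j+1)$ with $4(j+1)^2$ singularities of type $A_j$.
   Context: A singularity of type $A_j$ of a surface is a point where it is locally analytically equivalent to $x^{j+1}+y^2+z^2=0$. *)

From Stdlib Require Import Reals Arith.
From Coquelicot Require Import Coquelicot.

Open Scope C_scope.

Definition C3 := (C * C * C)%type.
Definition C4 := (C * C * C * C)%type.

(* Homogeneous polynomial of degree d in x0,x1,x2,x3, given by its
   coefficients c a b e of the monomial x0^a x1^b x2^e x3^(d-a-b-e)
   (only a+b+e <= d is relevant). *)
Definition hp_eval (d : nat) (c : nat -> nat -> nat -> C) (x : C4) : C :=
  let '(x0, x1, x2, x3) := x in
  sum_n (fun a => sum_n (fun b => sum_n (fun e =>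
     if (a + b + e <=? d)%nat
     then c a b e * pow_n x0 a * pow_n x1 b * pow_n x2 e * pow_n x3 (d - a - b - e)%nat
     else RtoC 0) d) d) d.

Definition hp_nonzero (d : nat) (c : nat -> nat -> nat -> C) : Prop :=
  exists a b e, (a + b + e <= d)%nat /\ c a b e <> RtoC 0.

Definition zero4 : C4 := (RtoC 0, RtoC 0, RtoC 0, RtoC 0).

Definition coord4 (k : nat) (x : C4) : C :=
  let '(x0, x1, x2, x3) := x in
  match k with 0 => x0 | 1 => x1 | 2 => x2 | _ => x3 end.

Definition scal4 (l : C) (x : C4) : C4 :=
  let '(x0, x1, x2, x3) := x in (l * x0, l * x1, l * x2, l * x3).

Definition chart (k : nat) (y : C3) : C4 :=
  let '(y0, y1, y2) := y in
  match k with
  | 0 => (RtoC 1, y0, y1, y2)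
  | 1 => (y0, RtoC 1, y1, y2)
  | 2 => (y0, y1, RtoC 1, y2)
  | _ => (y0, y1, y2, RtoC 1)
  end.

Definition dechart (k : nat) (x : C4) : C3 :=
  let '(x0, x1, x2, x3) := x in
  match k with
  | 0 => (x1, x2, x3)
  | 1 => (x0, x2, x3)
  | 2 => (x0, x1, x3)
  | _ => (x0, x1, x2)
  end.

(* holomorphic on U: complex-differentiable (C-linear Frechet derivative) at
   every point of U *)
Definition holo_on {V : NormedModule C_AbsRing} (f : C3 -> V) (U : C3 -> Prop) : Prop :=
  forall x : C3, U x -> ex_filterdiff (K := C_AbsRing) f (locally x).

Definition A_form (j : nat) (w : C3) : C :=
  let '(w0, w1, w2) := w in pow_n w0 (j + 1) + pow_n w1 2 + pow_n w2 2.

(* The hypersurface germ {f = 0} at q is locally analytically equivalent to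
   the germ {A_form j = 0} at 0: there is a biholomorphism Phi : U -> W of open
   neighbourhoods of q and 0, Phi q = 0, and a nowhere vanishing holomorphic
   unit u on U with f = u * (A_form j o Phi) on U. *)
Definition germ_Aj (j : nat) (f : C3 -> C) (q : C3) : Prop :=
  exists (U W : C3 -> Prop) (Phi Psi : C3 -> C3) (u : C3 -> C),
    open U /\ open W /\ U q /\ Phi q = (RtoC 0, RtoC 0, RtoC 0) /\
    (forall x, U x -> W (Phi x) /\ Psi (Phi x) = x) /\
    (forall w, W w -> U (Psi w) /\ Phi (Psi w) = w) /\
    holo_on Phi U /\ holo_on Psi W /\ holo_on u U /\
    (forall x, U x -> u x <> RtoC 0) /\
    (forall x, U x -> f x = u x * A_form j (Phi x)).

(* The surface {F = 0} in P^3(C), F = hp_eval d c, has a singularity of type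
   A_j at the projective point [p] (p <> 0): in an affine chart x_k = 1 with
   p_k <> 0, the affine equation has an A_j germ at the image of [p]. *)
Definition is_Aj_point (j d : nat) (c : nat -> nat -> nat -> C) (p : C4) : Prop :=
  exists k : nat, (k <= 3)%nat /\ coord4 k p <> RtoC 0 /\
    germ_Aj j (fun y => hp_eval d c (chart k y)) (dechart k (scal4 (/ coord4 k p) p)).

Definition proj_distinct (p q : C4) : Prop :=
  ~ (exists l : C, q = scal4 l p).

(* Put m = j + 1 and let Q(a, b, c, d) = 2 (ab + ac + ad + bc + bd + cd) - 2 (a^2 + b^2 + c^2 + d^2).
   The quadric Q = 0 is smooth and tangent to each coordinate plane a_k = 0, e.g. to a = 0 at
   (0, 1, 1, 1).  The surface is Q(x0^m, x1^m, x2^m, x3^m) = 0, of degree 2m, and over each of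
   the four tangency points lie the m^2 points with x_k = 0 and m-th roots of unity elsewhere.

   Near such a point, in the chart x3 = 1 with X = x^m, s = y^m - 1, t = z^m - 1, the equation
   reads 2 X D - 2 (s - lam t)(s - mu t) with D = 3 + s + t - X and lam, mu the roots of
   z^2 - z + 1.  Hence it is 2 D (X + P Q) with P = -(s - lam t) / D and Q = s - mu t, and
   P Q = w1^2 + w2^2 for w1 = (P + Q) / 2, w2 = -i (P - Q) / 2.  The map (x, y, z) |-> (x, w1, w2)
   is biholomorphic near the point: its inverse solves a linear system for (s, t) and takes
   m-th roots of 1 + s and 1 + t, so the germ is x^m + w1^2 + w2^2 up to the unit 2 D. *)

From Stdlib Require Import Reals Arith Lia Lra List.
From Coquelicot Require Import Coquelicot.
Import ListNotations.
Open Scope C_scope.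

(** * Complex differentiability *)

Lemma RtoC_neq_0 (r : R) : r <> 0%R -> RtoC r <> 0.
Proof. intros H E. injection E. auto. Qed.

Lemma Cmod_sub_lower (a b : C) : Cmod a - Cmod b <= Cmod (a - b).
Proof.
  assert (H := Cmod_triangle (a - b) b).
  replace (a - b + b) with a in H by ring. lra.
Qed.

Lemma Cball_neq_0 (z c : C) : Cmod (z - c) < Cmod c -> z <> 0.
Proof. intros H ->. replace (0 - c) with (- c) in H by ring. rewrite Cmod_opp in H. lra. Qed.

Lemma Cmod_RtoC_pos (r : R) : (0 <= r)%R -> Cmod r = r.
Proof. intros. rewrite Cmod_R, Rabs_pos_eq; auto. Qed.

Lemma Rabs_Re_le_Cmod (z : C) : (Rabs (fst z) <= Cmod z)%R.
Proof. eapply Rle_trans; [apply Rmax_l | apply Rmax_Cmod]. Qed.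

Lemma Rabs_Im_le_Cmod (z : C) : (Rabs (snd z) <= Cmod z)%R.
Proof. eapply Rle_trans; [apply Rmax_r | apply Rmax_Cmod]. Qed.

Lemma continuous_Cmod (z : C) : continuous Cmod z.
Proof.
  unfold Cmod.
  apply (continuous_comp (fun x : C => (fst x ^ 2 + snd x ^ 2)%R) sqrt); [|apply continuous_sqrt].
  apply (continuous_plus (fun x : C => (fst x ^ 2)%R) (fun x : C => (snd x ^ 2)%R));
    simpl; repeat apply (continuous_mult (K := R_AbsRing));
    first [apply continuous_fst | apply continuous_snd | apply continuous_const].
Qed.

Lemma open_Cball (c : C) (e : R) : open (fun z : C => Cmod (z - c) < e).
Proof.
  apply (open_comp (fun z : C => Cmod (z - c)) (fun u : R => u < e)); [|apply open_lt].
  intros x _. apply (continuous_comp (fun v : C => v - c) Cmod); [|apply continuous_Cmod].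
  apply (continuous_plus (fun v : C => v) (fun _ : C => - c));
    [apply continuous_id | apply continuous_const].
Qed.

Lemma locally_Cball (z : C) (e : R) : 0 < e -> locally z (fun v => Cmod (v - z) < e).
Proof.
  intros He. apply (locally_open (fun v => Cmod (v - z) < e)); [apply open_Cball|auto|].
  replace (z - z) with (RtoC 0) by ring. rewrite Cmod_0. auto.
Qed.

Lemma open_and_preimage {T U : UniformSpace} (A : T -> Prop) (B : U -> Prop) (f : T -> U) :
  open A -> open B -> (forall x, A x -> continuous f x) -> open (fun x => A x /\ B (f x)).
Proof.
  intros HA HB Hc x [Ax Bx].
  apply filter_and; [apply HA | apply (Hc x Ax), HB]; auto.
Qed.

Notation C_K := (AbsRing_NormedModule C_AbsRing).

Lemma Cinv_remainder_bound (y z : C) : z <> 0 -> Cmod (y - z) < Cmod z / 2 ->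
  Cmod (/ y - / z - (y - z) * (- / (z * z)))
  <= 2 * Cmod (y - z) * Cmod (y - z) / (Cmod z * Cmod z * Cmod z).
Proof.
  intros Hz Hyz.
  assert (Hm : 0 < Cmod z) by (apply Cmod_gt_0; auto).
  assert (Hy : Cmod z / 2 < Cmod y).
  { assert (H := Cmod_sub_lower z y).
    replace (z - y) with (- (y - z)) in H by ring. rewrite Cmod_opp in H. lra. }
  assert (Hy0 : y <> RtoC 0) by (intros ->; rewrite Cmod_0 in Hy; lra).
  replace (/ y - / z - (y - z) * (- / (z * z))) with ((y - z) * (y - z) / (y * (z * z)))
    by (field; split; auto).
  unfold Cdiv. rewrite !Cmod_mult, Cmod_inv, !Cmod_mult by (repeat apply Cmult_neq_0; auto).
  assert (0 <= Cmod (y - z)) by apply Cmod_ge_0.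
  apply Rle_trans with (Cmod (y - z) * Cmod (y - z) * / (Cmod z / 2 * (Cmod z * Cmod z)))%R.
  - apply Rmult_le_compat_l; [nra|].
    apply Rinv_le_contravar; [apply Rmult_lt_0_compat; nra | apply Rmult_le_compat_r; nra].
  - right. field. lra.
Qed.

Lemma is_derive_Cinv (z : C) : z <> 0 ->
  is_derive (K := C_AbsRing) (V := C_K) Cinv z (- / (z * z)).
Proof.
  intros Hz. split; [apply is_linear_scal_l|].
  intros x Hx. apply (@is_filter_lim_locally_unique C_AbsRing C_K) in Hx. subst x.
  intros eps.
  assert (Hm : 0 < Cmod z) by (apply Cmod_gt_0; auto).
  assert (Hm3 : 0 < Cmod z * Cmod z * Cmod z) by (repeat apply Rmult_lt_0_compat; auto).
  assert (He : 0 < eps) by apply cond_pos.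
  set (d := Rmin (Cmod z / 2) (eps * (Cmod z * Cmod z * Cmod z) / 2)).
  assert (Hd : 0 < d) by (apply Rmin_glb_lt; nra).
  apply locally_C. apply filter_imp with (2 := locally_Cball z d Hd).
  intros y Hy.
  change (Cmod (/ y - / z - (y - z) * (- / (z * z))) <= eps * Cmod (y - z)).
  eapply Rle_trans; [apply Cinv_remainder_bound; auto; eapply Rlt_le_trans; [apply Hy | apply Rmin_l]|].
  assert (Hy2 : Cmod (y - z) <= eps * (Cmod z * Cmod z * Cmod z) / 2)
    by (left; eapply Rlt_le_trans; [apply Hy | apply Rmin_r]).
  assert (0 <= Cmod (y - z)) by apply Cmod_ge_0.
  apply Rmult_le_reg_r with (Cmod z * Cmod z * Cmod z)%R; auto.
  unfold Rdiv. rewrite Rmult_assoc, Rinv_l by lra. nra.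
Qed.

(* The first bound gives |d| |l| <= 2 |h|, and then the second one controls d - h / l. *)
Lemma local_inverse_remainder_bound (d h l : C) (eps : R) : l <> 0 -> 0 < eps ->
  Cmod (h - d * l) <= Rmin (Cmod l / 2) (eps * (Cmod l * Cmod l) / 2) * Cmod d ->
  Cmod (d - h * / l) <= eps * Cmod h.
Proof.
  intros Hl He Hv.
  assert (Hm : 0 < Cmod l) by (apply Cmod_gt_0; auto).
  assert (0 <= Cmod d) by apply Cmod_ge_0.
  set (E := h - d * l) in *.
  assert (HE1 : Cmod E <= Cmod l / 2 * Cmod d)
    by (eapply Rle_trans; [apply Hv | apply Rmult_le_compat_r; [apply Cmod_ge_0 | apply Rmin_l]]).
  assert (HE2 : Cmod E <= eps * (Cmod l * Cmod l) / 2 * Cmod d)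
    by (eapply Rle_trans; [apply Hv | apply Rmult_le_compat_r; [apply Cmod_ge_0 | apply Rmin_r]]).
  assert (Hd1 : Cmod d * Cmod l <= Cmod h + Cmod E).
  { rewrite <- Cmod_mult. replace (d * l) with (h - E) by (unfold E; ring).
    eapply Rle_trans; [apply Cmod_triangle | rewrite Cmod_opp; lra]. }
  assert (Hd2 : Cmod d * Cmod l <= 2 * Cmod h) by nra.
  replace (d - h * / l) with (- (E / l)) by (unfold E; field; auto).
  rewrite Cmod_opp. unfold Cdiv. rewrite Cmod_mult, Cmod_inv by auto.
  apply Rmult_le_reg_r with (Cmod l); auto.
  rewrite Rmult_assoc, Rinv_l, Rmult_1_r by lra.
  assert (H3 : 0 <= eps * Cmod l / 2) by nra.
  assert (H4 := Rmult_le_compat_l _ _ _ H3 Hd2).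
  nra.
Qed.

Lemma is_derive_local_inverse (f g : C -> C) (b l : C) :
  continuous f b -> locally b (fun v => g (f v) = v) ->
  is_derive (K := C_AbsRing) (V := C_K) g (f b) l -> l <> 0 ->
  is_derive (K := C_AbsRing) (V := C_K) f b (/ l).
Proof.
  intros Hc Hgf [_ Hg] Hl. split; [apply is_linear_scal_l|].
  intros x Hx. apply (@is_filter_lim_locally_unique C_AbsRing C_K) in Hx. subst x.
  intros eps.
  assert (Hm : 0 < Cmod l) by (apply Cmod_gt_0; auto).
  assert (He : 0 < eps) by apply cond_pos.
  set (e := Rmin (Cmod l / 2) (eps * (Cmod l * Cmod l) / 2)).
  assert (He' : 0 < e).
  { apply Rmin_glb_lt; [lra|]. assert (0 < Cmod l * Cmod l) by nra. nra. }
  specialize (Hg (f b) (fun P H => H) (mkposreal _ He')). simpl in Hg.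
  apply locally_C in Hg. specialize (Hc _ Hg). unfold filtermap in Hc.
  assert (Hb : g (f b) = b) by (apply locally_singleton in Hgf; auto).
  apply locally_C. apply filter_imp with (2 := filter_and _ _ Hc Hgf).
  intros v [Hv Hgv].
  change (Cmod (g (f v) - g (f b) - (f v - f b) * l) <= e * Cmod (f v - f b)) in Hv.
  change (Cmod (f v - f b - (v - b) * / l) <= eps * Cmod (v - b)).
  rewrite Hgv, Hb in Hv.
  apply local_inverse_remainder_bound; auto.
Qed.

(* Complex differentiability with C normed over itself as an absolute-value ring, the form
   expected by Coquelicot's product and chain rules; holo_on uses C_NormedModule instead. *)
Definition holo_at {U : NormedModule C_AbsRing} (f : U -> C) (x : U) : Prop :=
  @ex_filterdiff C_AbsRing U C_K f (locally x).

Lemma holo_at_C_NormedModule {U : NormedModule C_AbsRing} (f : U -> C) (x : U) :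
  holo_at f x -> @ex_filterdiff C_AbsRing _ C_NormedModule f (locally x).
Proof. intros [l [[H1 H2 H3] H4]]. exists l. repeat split; auto. Qed.

Lemma C_NormedModule_holo_at {U : NormedModule C_AbsRing} (f : U -> C) (x : U) :
  @ex_filterdiff C_AbsRing _ C_NormedModule f (locally x) -> holo_at f x.
Proof. intros [l [[H1 H2 H3] H4]]. exists l. repeat split; auto. Qed.

Lemma Cmult_comm_K : forall a b : C_AbsRing, mult a b = mult b a.
Proof. intros. apply Cmult_comm. Qed.

Section HoloAt.
Context {U : NormedModule C_AbsRing}.
Implicit Types (f g : U -> C) (x : U).

Lemma holo_at_const (c : C) x : holo_at (fun _ => c) x.
Proof. apply ex_filterdiff_const. Qed.

Lemma holo_at_plus f g x : holo_at f x -> holo_at g x -> holo_at (fun v => f v + g v) x.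
Proof. intros. apply (ex_filterdiff_plus_fct (V := C_K) f g); auto. Qed.

Lemma holo_at_opp f x : holo_at f x -> holo_at (fun v => - f v) x.
Proof. intros. apply (ex_filterdiff_opp_fct (V := C_K) f); auto. Qed.

Lemma holo_at_minus f g x : holo_at f x -> holo_at g x -> holo_at (fun v => f v - g v) x.
Proof. intros. apply holo_at_plus, holo_at_opp; auto. Qed.

Lemma holo_at_mult f g x : holo_at f x -> holo_at g x -> holo_at (fun v => f v * g v) x.
Proof. intros. apply (ex_filterdiff_mult_fct f g x Cmult_comm_K); auto. Qed.

Lemma holo_at_comp f (h : C -> C) x :
  holo_at f x -> ex_derive (K := C_AbsRing) (V := C_K) h (f x) -> holo_at (fun v => h (f v)) x.
Proof.
  intros Hf Hh. apply (ex_filterdiff_comp' (V := C_K) (W := C_K) f h x Hf).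
  apply ex_derive_filterdiff. auto.
Qed.

Lemma holo_at_pow_n f n x : holo_at f x -> holo_at (fun v => pow_n (f v) n) x.
Proof.
  intros Hf. apply (holo_at_comp f (fun y => pow_n y n) x Hf).
  eexists. apply (filterdiff_pow_n (K := C_AbsRing) (f x) n Cmult_comm_K).
Qed.

Lemma holo_at_div f g x : holo_at f x -> holo_at g x -> g x <> 0 -> holo_at (fun v => f v / g v) x.
Proof.
  intros Hf Hg Hg0. apply holo_at_mult; auto.
  apply (holo_at_comp g Cinv x Hg). eexists. apply is_derive_Cinv. auto.
Qed.

End HoloAt.

Definition C3N := prod_NormedModule C_AbsRing
  (prod_NormedModule C_AbsRing C_NormedModule C_NormedModule) C_NormedModule.

Lemma is_linear_C3_x : is_linear (U := C3N) (V := C_NormedModule) (fun v : C3 => fst (fst v)).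
Proof. apply (is_linear_comp (fun t : C3 => fst t) (fun t : C * C => fst t)); apply is_linear_fst. Qed.

Lemma is_linear_C3_y : is_linear (U := C3N) (V := C_NormedModule) (fun v : C3 => snd (fst v)).
Proof.
  apply (is_linear_comp (fun t : C3 => fst t) (fun t : C * C => snd t));
    [apply is_linear_fst | apply is_linear_snd].
Qed.

Lemma is_linear_C3_z : is_linear (U := C3N) (V := C_NormedModule) (fun v : C3 => snd v).
Proof. apply is_linear_snd. Qed.

Lemma holo_at_fst_fst (x : C3) : holo_at (fun v : C3 => fst (fst v)) x.
Proof. apply C_NormedModule_holo_at, ex_filterdiff_linear, is_linear_C3_x. Qed.

Lemma holo_at_snd_fst (x : C3) : holo_at (fun v : C3 => snd (fst v)) x.
Proof. apply C_NormedModule_holo_at, ex_filterdiff_linear, is_linear_C3_y. Qed.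

Lemma holo_at_snd (x : C3) : holo_at (fun v : C3 => snd v) x.
Proof. apply C_NormedModule_holo_at, ex_filterdiff_linear, is_linear_C3_z. Qed.

Lemma holo_at_triple (f0 f1 f2 : C3 -> C) (x : C3) :
  holo_at f0 x -> holo_at f1 x -> holo_at f2 x ->
  ex_filterdiff (K := C_AbsRing) (V := C3N) (fun v => (f0 v, f1 v, f2 v)) (locally x).
Proof.
  assert (Hpair : forall (T V W : NormedModule C_AbsRing) (f : T -> V) (g : T -> W) (y : T),
    ex_filterdiff f (locally y) -> ex_filterdiff g (locally y) ->
    ex_filterdiff (fun v => (f v, g v)) (locally y)).
  { intros T V W f g y Hf Hg. apply (ex_filterdiff_comp'_2 f g (fun a b => (a, b)) y Hf Hg).
    apply ex_filterdiff_linear, is_linear_prod; [apply is_linear_fst | apply is_linear_snd]. }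
  intros H0 H1 H2.
  apply (Hpair C3N (prod_NormedModule C_AbsRing C_NormedModule C_NormedModule) C_NormedModule
           (fun v => (f0 v, f1 v)) f2 x);
    [apply (Hpair C3N C_NormedModule C_NormedModule f0 f1 x)|];
    apply holo_at_C_NormedModule; auto.
Qed.

Lemma holo_at_continuous (f : C3 -> C) (x : C3) : holo_at f x -> continuous f x.
Proof.
  intros H. apply filterdiff_continuous in H.
  intros P HP. apply locally_C in HP. apply H. auto.
Qed.

Lemma continuous_of_ex_filterdiff_C3 (f : C3 -> C3) (v : C3) :
  ex_filterdiff (U := C3N) (V := C3N) f (locally v) -> continuous f v.
Proof. exact (filterdiff_continuous (U := C3N) (V := C3N) f v). Qed.

Lemma open_Cball_preimage (g : C3 -> C) (c : C) (e : R) :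
  (forall v, holo_at g v) -> open (fun v => Cmod (g v - c) < e).
Proof.
  intros Hg. apply (open_comp g (fun z => Cmod (z - c) < e)); [|apply open_Cball].
  intros v _. apply holo_at_continuous. auto.
Qed.

Lemma open_and_Cball_preimage (A : C3 -> Prop) (g : C3 -> C) (c : C) (e : R) :
  open A -> (forall v, A v -> holo_at g v) -> open (fun v => A v /\ Cmod (g v - c) < e).
Proof.
  intros HA Hg. apply (open_and_preimage A (fun z => Cmod (z - c) < e) g HA);
    [apply open_Cball | intros v Hv; apply holo_at_continuous; auto].
Qed.

Ltac holo_step :=
  match goal with
  | |- holo_at (fun v => Cplus (@?f v) (@?g v)) _ => apply (holo_at_plus f g)
  | |- holo_at (fun v => Cminus (@?f v) (@?g v)) _ => apply (holo_at_minus f g)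
  | |- holo_at (fun v => Copp (@?f v)) _ => apply (holo_at_opp f)
  | |- holo_at (fun v => Cdiv (@?f v) (@?g v)) _ => apply (holo_at_div f g)
  | |- holo_at (fun v => Cmult (@?f v) (@?g v)) _ => apply (holo_at_mult f g)
  | |- holo_at (fun v => pow_n (@?f v) ?n) _ => apply (holo_at_pow_n f n)
  | |- holo_at (fun v => fst (fst v)) _ => apply holo_at_fst_fst
  | |- holo_at (fun v => snd (fst v)) _ => apply holo_at_snd_fst
  | |- holo_at (fun v => snd v) _ => apply holo_at_snd
  | |- holo_at (fun v => ?c) ?x => exact (holo_at_const c x)
  end.
Ltac holo_tac := repeat holo_step.

Lemma pow_n_Cpow (x : C) n : pow_n x n = Cpow x n.
Proof. induction n; simpl; try rewrite IHn; auto. Qed.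

Lemma pow_n_Cmult (a b : C) n : pow_n (a * b) n = pow_n a n * pow_n b n.
Proof. rewrite !pow_n_Cpow. apply Cpow_mult_l. Qed.

Lemma pow_n_RtoC (K : R) n : pow_n (RtoC K) n = RtoC (K ^ n).
Proof. rewrite pow_n_Cpow. symmetry. apply RtoC_pow. Qed.

Lemma pow_n_neq_0 (x : C) n : x <> 0 -> pow_n x n <> RtoC 0.
Proof. intros H. rewrite pow_n_Cpow. apply Cpow_nz. auto. Qed.

Definition cis (t : R) : C := (cos t, sin t).

Lemma cis_add a b : cis a * cis b = cis (a + b).
Proof. unfold cis, Cmult. simpl. rewrite cos_plus, sin_plus. f_equal; ring. Qed.

Lemma cis_pow_n a n : pow_n (cis a) n = cis (INR n * a).
Proof.
  induction n.
  - simpl. unfold cis. rewrite Rmult_0_l, cos_0, sin_0. reflexivity.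
  - change (pow_n (cis a) (S n)) with (cis a * pow_n (cis a) n).
    rewrite IHn, cis_add, S_INR. f_equal. ring.
Qed.

Lemma RtoC_mult_cis (K t : R) : RtoC K * cis t = (K * cos t, K * sin t)%R.
Proof. unfold RtoC, cis, Cmult. simpl. f_equal; ring. Qed.

Lemma Cmod_RtoC_mult_cis (K t : R) : (0 <= K)%R -> Cmod (RtoC K * cis t) = K.
Proof.
  intros HK. rewrite Cmod_mult, Cmod_RtoC_pos by auto. unfold cis, Cmod. simpl.
  replace (cos t * (cos t * 1) + sin t * (sin t * 1))%R with 1%R by
    (assert (H := sin2_cos2 t); unfold Rsqr in H; lra).
  rewrite sqrt_1. ring.
Qed.

Lemma polar_form (v : C) : (0 < fst v)%R -> v = RtoC (Cmod v) * cis (atan (snd v / fst v)).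
Proof.
  destruct v as [a b]. simpl. intros Ha.
  rewrite RtoC_mult_cis, cos_atan, sin_atan. unfold Cmod. simpl.
  set (t := (b / a)%R).
  assert (Ha0 : a <> 0%R) by lra.
  assert (Ht : (a * (a * 1) + b * (b * 1) = a * a * (1 + t²))%R) by (unfold t, Rsqr; field; auto).
  assert (Hs : 0 < sqrt (1 + t²)) by (apply sqrt_lt_R0; assert (0 <= t²) by apply Rle_0_sqr; lra).
  rewrite Ht, sqrt_mult, sqrt_square by (try apply Rle_0_sqr; nra).
  assert (Hs0 : sqrt (1 + t²) <> 0%R) by lra.
  f_equal; [field | unfold t; field]; auto.
Qed.

Lemma Cmod_pos_of_Re_pos (v : C) : (0 < fst v)%R -> (0 < Cmod v)%R.
Proof. intros H. apply Cmod_gt_0. intros ->. simpl in H. lra. Qed.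

Lemma exp_pow (c : R) n : (exp c ^ n = exp (INR n * c))%R.
Proof.
  induction n; [simpl; rewrite Rmult_0_l, exp_0; auto|].
  rewrite <- tech_pow_Rmult, IHn, <- exp_plus, S_INR. f_equal. ring.
Qed.

(** * A holomorphic m-th root near 1 *)

(* An m-th root on the half-plane Re v > 0, through polar coordinates; elsewhere the value is junk. *)
Definition Croot (m : nat) (v : C) : C :=
  RtoC (exp (ln (Cmod v) * / INR m)) * cis (atan (snd v / fst v) * / INR m).

Lemma Croot_pow_n m v : (1 <= m)%nat -> (0 < fst v)%R -> pow_n (Croot m v) m = v.
Proof.
  intros Hm Hv. unfold Croot.
  assert (HmR : INR m <> 0%R) by (apply not_0_INR; lia).
  rewrite pow_n_Cmult, pow_n_RtoC, cis_pow_n, exp_pow.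
  replace (INR m * (ln (Cmod v) * / INR m))%R with (ln (Cmod v)) by (field; auto).
  replace (INR m * (atan (snd v / fst v) * / INR m))%R with (atan (snd v / fst v)) by (field; auto).
  rewrite exp_ln by (apply Cmod_pos_of_Re_pos; auto).
  symmetry. apply polar_form. auto.
Qed.

Lemma Croot_neq_0 m v : Croot m v <> 0.
Proof.
  unfold Croot. intros H. apply (f_equal Cmod) in H.
  rewrite Cmod_RtoC_mult_cis, Cmod_0 in H by (left; apply exp_pos).
  assert (H1 := exp_pos (ln (Cmod v) * / INR m)). lra.
Qed.

Lemma Re_pos_near_1 (y : C) : Cmod (y - 1) < 1 -> (0 < fst y)%R.
Proof.
  intros H. assert (H1 := Rabs_Re_le_Cmod (y - 1)).
  replace (fst (y - 1)) with (fst y - 1)%R in H1 by (simpl; ring).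
  assert (H2 : (Rabs (fst y - 1) < 1)%R) by lra. apply Rabs_def2 in H2. lra.
Qed.

Lemma Croot_pow_n_polar m (K phi : R) : (1 <= m)%nat -> (0 < K)%R ->
  (Rabs (INR m * phi) < PI / 2)%R -> Croot m (pow_n (RtoC K * cis phi) m) = RtoC K * cis phi.
Proof.
  intros Hm HK Hphi.
  assert (HmR : INR m <> 0%R) by (apply not_0_INR; lia).
  apply Rabs_def2 in Hphi.
  assert (Hcos : (0 < cos (INR m * phi))%R) by (apply cos_gt_0; lra).
  rewrite pow_n_Cmult, pow_n_RtoC, cis_pow_n.
  unfold Croot. rewrite Cmod_RtoC_mult_cis by (apply pow_le; lra).
  simpl fst. simpl snd.
  replace ((K ^ m * sin (INR m * phi) + 0 * cos (INR m * phi))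
           / (K ^ m * cos (INR m * phi) - 0 * sin (INR m * phi)))%R with (tan (INR m * phi))
    by (unfold tan; field; split; [lra | apply pow_nonzero; lra]).
  rewrite atan_tan, ln_pow by (try split; lra).
  replace (INR m * ln K * / INR m)%R with (ln K) by (field; auto).
  replace (INR m * phi * / INR m)%R with phi by (field; auto).
  rewrite exp_ln by auto. reflexivity.
Qed.

(* On this disc around 1 the argument stays below pi / (4 m), so Croot inverts v |-> v^m. *)
Definition eps_root (m : nat) : R := Rmin (1/2) (tan (PI / (4 * INR m)) / 4).

Lemma PI_4m_bounds m : (1 <= m)%nat -> (0 < PI / (4 * INR m) < PI / 2)%R.
Proof.
  intros Hm. assert (1 <= INR m)%R by (apply (le_INR 1); auto).
  assert (HPI := PI_RGT_0). split; [apply Rdiv_lt_0_compat; lra|].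
  apply Rmult_lt_reg_r with (4 * INR m)%R; [lra|].
  unfold Rdiv. rewrite Rmult_assoc, Rinv_l by lra. nra.
Qed.

Lemma eps_root_pos m : (1 <= m)%nat -> (0 < eps_root m)%R.
Proof.
  intros Hm. unfold eps_root. apply Rmin_glb_lt; [lra|].
  assert (H := PI_4m_bounds m Hm). assert (0 < tan (PI / (4 * INR m)))%R by (apply tan_gt_0; lra).
  lra.
Qed.

Lemma arg_bound_near_1 m (y : C) : (1 <= m)%nat -> Cmod (y - 1) < eps_root m ->
  (Rabs (INR m * atan (snd y / fst y)) < PI / 2)%R.
Proof.
  intros Hm Hy.
  assert (HmR : (1 <= INR m)%R) by (apply (le_INR 1); auto).
  assert (HPI := PI_RGT_0). assert (Hb := PI_4m_bounds m Hm).
  set (T := tan (PI / (4 * INR m))).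
  assert (HT : (0 < T)%R) by (apply tan_gt_0; lra).
  assert (Hre : (Rabs (fst y - 1) < 1/2)%R).
  { apply Rle_lt_trans with (Cmod (y - 1)); [apply (Rabs_Re_le_Cmod (y - 1))|].
    eapply Rlt_le_trans; [apply Hy | apply Rmin_l]. }
  assert (Him : (Rabs (snd y) < T / 4)%R).
  { apply Rle_lt_trans with (Cmod (y - 1)).
    - replace (snd y) with (snd (y - 1)) by (simpl; ring). apply Rabs_Im_le_Cmod.
    - eapply Rlt_le_trans; [apply Hy | apply Rmin_r]. }
  apply Rabs_def2 in Hre.
  assert (Hq : (Rabs (snd y / fst y) < T)%R).
  { unfold Rdiv. rewrite Rabs_mult, Rabs_inv, (Rabs_pos_eq (fst y)) by lra.
    apply Rmult_lt_reg_r with (fst y); [lra|]. rewrite Rmult_assoc, Rinv_l, Rmult_1_r by lra.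
    assert (0 <= Rabs (snd y))%R by apply Rabs_pos. nra. }
  assert (Hphi : (Rabs (atan (snd y / fst y)) < PI / (4 * INR m))%R).
  { apply Rabs_def2 in Hq. apply Rabs_def1; rewrite <- (atan_tan (PI / (4 * INR m))) by lra;
      [| rewrite <- atan_opp]; apply atan_increasing; fold T; lra. }
  rewrite Rabs_mult, Rabs_pos_eq by lra.
  apply Rlt_le_trans with (INR m * (PI / (4 * INR m)))%R; [apply Rmult_lt_compat_l; lra|].
  replace (INR m * (PI / (4 * INR m)))%R with (PI / 4)%R by (field; lra). lra.
Qed.

Lemma Croot_pow_n_near_1 m (y : C) : (1 <= m)%nat -> Cmod (y - 1) < eps_root m ->
  Croot m (pow_n y m) = y.
Proof.
  intros Hm Hy.
  assert (Hre : (0 < fst y)%R).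
  { apply Re_pos_near_1. eapply Rlt_le_trans; [apply Hy|]. unfold eps_root.
    eapply Rle_trans; [apply Rmin_l | lra]. }
  rewrite (polar_form y Hre) at 1 2.
  apply Croot_pow_n_polar; auto.
  - apply Cmod_pos_of_Re_pos; auto.
  - apply arg_bound_near_1; auto.
Qed.

Lemma continuous_Croot m v : (0 < fst v)%R -> continuous (Croot m) v.
Proof.
  intros Hv.
  assert (Hfst : continuous (fun w : C => fst w) v) by (destruct v; apply continuous_fst).
  assert (Hsnd : continuous (fun w : C => snd w) v) by (destruct v; apply continuous_snd).
  assert (Hmul : forall f g : C -> R, continuous f v -> continuous g v ->
            continuous (fun w => (f w * g w)%R) v)
    by (intros; apply (continuous_mult (K := R_AbsRing)); auto).
  assert (Hmod : continuous (fun w => exp (ln (Cmod w) * / INR m)) v).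
  { apply (continuous_comp (fun w => ln (Cmod w) * / INR m)%R exp); [|apply continuous_exp].
    apply Hmul; [|apply continuous_const].
    apply (continuous_comp Cmod ln); [apply continuous_Cmod|].
    apply continuous_ln, Cmod_pos_of_Re_pos; auto. }
  assert (Harg : continuous (fun w => atan (snd w / fst w) * / INR m)%R v).
  { apply Hmul; [|apply continuous_const].
    apply (continuous_comp (fun w => snd w / fst w)%R atan); [|apply continuous_atan].
    apply Hmul; auto.
    apply (continuous_comp (fun w : C => fst w) Rinv); auto. apply continuous_Rinv. lra. }
  apply (continuous_ext (fun w => (exp (ln (Cmod w) * / INR m) * cos (atan (snd w / fst w) * / INR m),
                                    exp (ln (Cmod w) * / INR m) * sin (atan (snd w / fst w) * / INR m))%R : C)).
  { intros w. unfold Croot. rewrite RtoC_mult_cis. reflexivity. }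
  apply (continuous_comp_2 (X := C_UniformSpace) _ _ (fun a b => (a, b) : C) v).
  - apply Hmul; auto. apply (continuous_comp _ cos); auto. apply continuous_cos.
  - apply Hmul; auto. apply (continuous_comp _ sin); auto. apply continuous_sin.
  - apply (continuous_ext (fun x => x)); [intros [a b]; reflexivity | apply continuous_id].
Qed.

Lemma open_Re_pos : open (fun w : C => (0 < fst w)%R).
Proof.
  apply (open_comp (fun w : C => fst w) (fun u => 0 < u)%R); [|apply open_gt].
  intros [a b] _. apply continuous_fst.
Qed.

Lemma nat_to_ring_C n : nat_to_ring (K := C_Ring) n = RtoC (INR n).
Proof.
  induction n; [reflexivity|].
  rewrite nat_to_ring_Sn, IHn, S_INR. change (RtoC (INR n) + 1 = RtoC (INR n + 1)).
  rewrite RtoC_plus. reflexivity.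
Qed.

(* Derivability comes from the inverse-function rule applied to v |-> v^m. *)
Lemma ex_derive_Croot m v : (1 <= m)%nat -> (0 < fst v)%R ->
  ex_derive (K := C_AbsRing) (V := C_K) (Croot m) v.
Proof.
  intros Hm Hv.
  set (l := mult (nat_to_ring (K := C_AbsRing) m) (pow_n (Croot m v) (pred m))).
  exists (/ l).
  apply (is_derive_local_inverse (Croot m) (fun y => pow_n y m) v l).
  - apply continuous_Croot; auto.
  - apply (locally_open (fun w : C => (0 < fst w)%R)); [apply open_Re_pos| |auto].
    intros w Hw. apply Croot_pow_n; auto.
  - apply (filterdiff_pow_n (K := C_AbsRing) (Croot m v) m Cmult_comm_K).
  - unfold l. apply Cmult_neq_0.
    + change (nat_to_ring (K := C_Ring) m <> RtoC 0). rewrite nat_to_ring_C. intros H.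
      apply RtoC_inj in H. apply (not_0_INR m); [lia | auto].
    + apply pow_n_neq_0, Croot_neq_0.
Qed.

(** * Roots of unity *)

Definition zeta (m a : nat) : C := cis (2 * PI * INR a / INR m).

Lemma zeta_pow_n m a : (1 <= m)%nat -> pow_n (zeta m a) m = RtoC 1.
Proof.
  intros Hm. unfold zeta. rewrite cis_pow_n.
  assert (INR m <> 0)%R by (apply not_0_INR; lia).
  replace (INR m * (2 * PI * INR a / INR m))%R with (0 + 2 * INR a * PI)%R by (field; auto).
  unfold cis. rewrite cos_period, sin_period, cos_0, sin_0. reflexivity.
Qed.

Lemma zeta_neq_0 m a : zeta m a <> 0.
Proof.
  unfold zeta, cis. intros H. injection H. intros H1 H2.
  apply (cos_sin_0 (2 * PI * INR a / INR m)). auto.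
Qed.

Lemma cis_neq_of_lt_2PI (s t : R) : (s < t < s + 2 * PI)%R -> cis s <> cis t.
Proof.
  intros Hst H. unfold cis in H. injection H. intros Hs Hc.
  assert (Hcos : cos (t - s) = 1%R).
  { rewrite cos_minus, Hc, Hs. assert (Hh := sin2_cos2 t). unfold Rsqr in Hh. lra. }
  assert (Hsin : sin (t - s) = 0%R) by (rewrite sin_minus, Hc, Hs; ring).
  destruct (sin_eq_O_2PI_0 (t - s)) as [E|[E|E]]; try lra.
  rewrite E, cos_PI in Hcos. lra.
Qed.

Lemma zeta_inj m a b : (a < m)%nat -> (b < m)%nat -> zeta m a = zeta m b -> a = b.
Proof.
  assert (Hlt : forall a b, (a < b < m)%nat -> zeta m a <> zeta m b).
  { intros a' b' [Hab Hbm]. unfold zeta. apply cis_neq_of_lt_2PI.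
    assert (HmR : (0 < INR m)%R) by (apply lt_0_INR; lia).
    apply lt_INR in Hab, Hbm. assert (Ha0 := pos_INR a'). assert (HPI := PI_RGT_0).
    unfold Rdiv. split; apply Rmult_lt_reg_r with (INR m); auto;
      rewrite ?Rmult_plus_distr_r, !Rmult_assoc, Rinv_l by lra; nra. }
  intros Ha Hb H. destruct (Nat.lt_total a b) as [H1|[H1|H1]]; auto; exfalso.
  - apply (Hlt a b); auto.
  - apply (Hlt b a); auto.
Qed.

Definition sixth_root : C := (1/2, sqrt 3 / 2)%R.
Definition sixth_root_conj : C := (1/2, - (sqrt 3 / 2))%R.

Lemma sixth_roots_sum : sixth_root + sixth_root_conj = 1.
Proof. unfold sixth_root, sixth_root_conj, Cplus, RtoC. simpl. f_equal; field. Qed.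

Lemma sixth_roots_prod : sixth_root * sixth_root_conj = 1.
Proof.
  unfold sixth_root, sixth_root_conj, Cmult, RtoC. simpl.
  assert (H := sqrt_sqrt 3 ltac:(lra)). f_equal; nra.
Qed.

Lemma sixth_roots_neq : sixth_root_conj - sixth_root <> 0.
Proof.
  unfold sixth_root, sixth_root_conj, Cminus, Cplus, Copp, RtoC. simpl. intros H.
  injection H. intros H1 H2. assert (H3 : (0 < sqrt 3)%R) by (apply sqrt_lt_R0; lra). lra.
Qed.

(** * The local normal form *)

Definition origin3 : C3 := (RtoC 0, RtoC 0, RtoC 0).

(* Phi and Psi need only be mutually inverse on their own domains: restricting to
   U0 /\ W0 o Phi and W0 /\ U0 o Psi makes them bijections between open sets. *)
Lemma germ_Aj_of_local_inverse j (f : C3 -> C) (q : C3) (U0 W0 : C3 -> Prop)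
    (Phi Psi : C3 -> C3) (u : C3 -> C) :
  open U0 -> open W0 -> U0 q -> Phi q = origin3 -> W0 origin3 ->
  holo_on Phi U0 -> holo_on Psi W0 ->
  (forall x, U0 x -> Psi (Phi x) = x) -> (forall w, W0 w -> Phi (Psi w) = w) ->
  holo_on u U0 -> (forall x, U0 x -> u x <> RtoC 0) ->
  (forall x, U0 x -> f x = u x * A_form j (Phi x)) ->
  germ_Aj j f q.
Proof.
  intros HU HW Hq HPhiq HW0 HPhi HPsi HPsiPhi HPhiPsi Hu Hu0 Hf.
  exists (fun x => U0 x /\ W0 (Phi x)), (fun w => W0 w /\ U0 (Psi w)), Phi, Psi, u.
  split; [|split].
  - apply (open_and_preimage U0 W0 Phi HU HW).
    intros. apply continuous_of_ex_filterdiff_C3, HPhi. auto.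
  - apply (open_and_preimage W0 U0 Psi HW HU).
    intros. apply continuous_of_ex_filterdiff_C3, HPsi. auto.
  - repeat split; intros; repeat match goal with H : _ /\ _ |- _ => destruct H end;
      try rewrite HPsiPhi; try rewrite HPhiPsi; try rewrite HPhiq; auto.
  all: intros x [Hx _]; first [apply HPhi | apply HPsi | apply Hu]; auto.
Qed.

Lemma Ci_sq : Ci * Ci = - (1).
Proof. unfold Ci, Cmult, Copp, RtoC. simpl. f_equal; ring. Qed.

Lemma two_neq_0 : RtoC 2 <> 0.
Proof. apply RtoC_neq_0. lra. Qed.

Lemma three_neq_0 : RtoC 3 <> 0.
Proof. apply RtoC_neq_0. lra. Qed.

(* The linear change of coordinates P = w1 + i w2, Q = w1 - i w2, with w1^2 + w2^2 = P Q. *)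
Lemma Ci_coords_P (P Q : C) : (P + Q) / 2 + Ci * (- Ci * (P - Q) / 2) = P.
Proof.
  transitivity ((P + Q) / 2 - (Ci * Ci) * (P - Q) / 2); [field|].
  rewrite Ci_sq. field.
Qed.

Lemma Ci_coords_Q (P Q : C) : (P + Q) / 2 - Ci * (- Ci * (P - Q) / 2) = Q.
Proof.
  transitivity ((P + Q) / 2 + (Ci * Ci) * (P - Q) / 2); [field|].
  rewrite Ci_sq. field.
Qed.

Lemma Ci_coords_sq (P Q : C) : pow_n ((P + Q) / 2) 2 + pow_n (- Ci * (P - Q) / 2) 2 = P * Q.
Proof.
  change (((P + Q) / 2) * (((P + Q) / 2) * 1) + (- Ci * (P - Q) / 2) * ((- Ci * (P - Q) / 2) * 1)
          = P * Q).
  transitivity ((P + Q) / 2 * ((P + Q) / 2) + (Ci * Ci) * ((P - Q) / 2 * ((P - Q) / 2)));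
    [field|].
  rewrite Ci_sq. field.
Qed.

Lemma Ci_coords_w1 (w1 w2 : C) : ((w1 + Ci * w2) + (w1 - Ci * w2)) / 2 = w1.
Proof. field. Qed.

Lemma Ci_coords_w2 (w1 w2 : C) : - Ci * ((w1 + Ci * w2) - (w1 - Ci * w2)) / 2 = w2.
Proof.
  transitivity (- (Ci * Ci) * w2); [field|].
  rewrite Ci_sq. ring.
Qed.

Lemma root_of_unity_neq_0 (b : C) n : pow_n b (n + 1) = RtoC 1 -> b <> 0.
Proof.
  intros H ->. rewrite Nat.add_1_r in H. simpl in H. rewrite Cmult_0_l in H.
  apply (RtoC_neq_0 1); [lra | auto].
Qed.

Lemma pow_n_0_add_1 n : pow_n (RtoC 0) (n + 1) = RtoC 0.
Proof. rewrite Nat.add_1_r. simpl. apply Cmult_0_l. Qed.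

Lemma Croot_near_root_of_unity m (b y : C) : (1 <= m)%nat -> pow_n b m = RtoC 1 -> b <> 0 ->
  Cmod (y / b - 1) < eps_root m -> b * Croot m (1 + (pow_n y m - 1)) = y.
Proof.
  intros Hm Hb Hb0 Hy.
  assert (E : @eq C (1 + (pow_n y m - 1)) (pow_n y m)) by ring. rewrite E.
  replace y with (b * (y / b)) at 1 by (field; auto).
  rewrite pow_n_Cmult, Hb, Cmult_1_l, Croot_pow_n_near_1 by auto.
  field. auto.
Qed.

Lemma pow_n_Croot_root_of_unity m (b c : C) : (1 <= m)%nat -> pow_n b m = RtoC 1 ->
  (0 < fst (1 + c)%C)%R -> pow_n (b * Croot m (1 + c)) m - 1 = c.
Proof. intros Hm Hb Hc. rewrite pow_n_Cmult, Hb, Croot_pow_n by auto. ring. Qed.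

Section NormalForm.
Variables (j : nat) (beta gamma lam mu : C).
Hypotheses (Hbeta : pow_n beta (j + 1) = RtoC 1) (Hgamma : pow_n gamma (j + 1) = RtoC 1)
  (Hsum : lam + mu = 1) (Hprod : lam * mu = 1) (Hdiff : mu - lam <> 0).

Definition affine_eq (v : C3) : C :=
  let X := pow_n (fst (fst v)) (j + 1) in
  let Y := pow_n (snd (fst v)) (j + 1) in
  let Z := pow_n (snd v) (j + 1) in
  -2 * (X * X + Y * Y + Z * Z + 1) + 2 * (X * Y + X * Z + X + Y * Z + Y + Z).

Definition Xv (v : C3) := pow_n (fst (fst v)) (j + 1).
Definition sv (v : C3) := pow_n (snd (fst v)) (j + 1) - 1.
Definition tv (v : C3) := pow_n (snd v) (j + 1) - 1.
Definition Dv (v : C3) := 3 + sv v + tv v - Xv v.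
Definition Pv (v : C3) := - (sv v - lam * tv v) / Dv v.
Definition Qv (v : C3) := sv v - mu * tv v.
Definition Phi (v : C3) : C3 := (fst (fst v), (Pv v + Qv v) / 2, - Ci * (Pv v - Qv v) / 2).

(* Inverting Phi: P and Q are read off w, then (s, t) solve a linear system of
   determinant Ew, and y, z are recovered as m-th roots of 1 + s, 1 + t. *)
Definition Pw (w : C3) := snd (fst w) + Ci * snd w.
Definition Qw (w : C3) := snd (fst w) - Ci * snd w.
Definition Ew (w : C3) := (mu - lam) + Pw w * (1 + mu).
Definition tw (w : C3) := (- Pw w * (3 - pow_n (fst (fst w)) (j + 1)) - (1 + Pw w) * Qw w) / Ew w.
Definition sw (w : C3) := Qw w + mu * tw w.
Definition Dw (w : C3) := 3 + sw w + tw w - pow_n (fst (fst w)) (j + 1).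
Definition Psi (w : C3) : C3 :=
  (fst (fst w), beta * Croot (j + 1) (1 + sw w), gamma * Croot (j + 1) (1 + tw w)).

(* Each condition is a ball Cmod (g - c) < e (hence the "- 0"), nested so that g is
   holomorphic wherever the preceding conditions hold. *)
Definition U0 (v : C3) : Prop :=
  ((Cmod (Dv v - 3) < 1 /\ Cmod (Pv v * (1 + mu) - 0) < Cmod (mu - lam))
    /\ Cmod (snd (fst v) / beta - 1) < eps_root (j + 1)) /\ Cmod (snd v / gamma - 1) < eps_root (j + 1).

Definition W0 (w : C3) : Prop :=
  ((Cmod (Ew w - (mu - lam)) < Cmod (mu - lam) /\ Cmod (sw w - 0) < 1)
    /\ Cmod (tw w - 0) < 1) /\ Cmod (Dw w - 3) < 1.

Definition q0 : C3 := (RtoC 0, beta, gamma).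

Lemma Dv_neq_0 v : Cmod (Dv v - 3) < 1 -> Dv v <> 0.
Proof. intros H. apply (Cball_neq_0 _ 3). rewrite Cmod_RtoC_pos; lra. Qed.

Lemma U0_Dv_neq_0 v : U0 v -> Dv v <> 0.
Proof. intros [[[H _] _] _]. apply Dv_neq_0. auto. Qed.

Lemma W0_Ew_neq_0 w : W0 w -> Ew w <> 0.
Proof. intros [[[H _] _] _]. apply (Cball_neq_0 _ (mu - lam)). auto. Qed.

Lemma factor_quadratic (s t : C) : (s - lam * t) * (s - mu * t) = s * s - s * t + t * t.
Proof.
  transitivity (s * s - (lam + mu) * s * t + (lam * mu) * t * t); [ring|].
  rewrite Hsum, Hprod. ring.
Qed.

Lemma affine_eq_normal_form v : Dv v <> 0 -> affine_eq v = 2 * Dv v * A_form j (Phi v).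
Proof.
  intros HD.
  assert (Hst : affine_eq v = 2 * Xv v * Dv v - 2 * ((sv v - lam * tv v) * (sv v - mu * tv v))).
  { rewrite factor_quadratic. unfold affine_eq, Dv, sv, tv, Xv. cbv zeta.
    generalize (pow_n (fst (fst v)) (j + 1)) (pow_n (snd (fst v)) (j + 1)) (pow_n (snd v) (j + 1)).
    intros. ring. }
  destruct v as [[x y] z]. unfold A_form, Phi. simpl fst. simpl snd.
  rewrite <- Cplus_assoc, Ci_coords_sq, Hst. unfold Pv, Qv.
  change (pow_n x (j + 1)) with (Xv (x, y, z)).
  revert HD. generalize (Xv (x, y, z)) (sv (x, y, z)) (tv (x, y, z)) (Dv (x, y, z)).
  intros X s t D HD. field. auto.
Qed.

Lemma tw_of_PQ (X s t P Q D E : C) : D = 3 + s + t - X -> P * D = - (s - lam * t) ->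
  Q = s - mu * t -> E = (mu - lam) + P * (1 + mu) -> E <> 0 ->
  (- P * (3 - X) - (1 + P) * Q) / E = t.
Proof.
  intros HD HPD HQ HE HE0.
  assert (H : - P * (3 - X) - (1 + P) * Q - t * E = 0).
  { transitivity (- (P * D + (s - lam * t))); [rewrite HD, HQ, HE; ring|].
    rewrite HPD. ring. }
  apply Ceq_minus in H. rewrite H. field. auto.
Qed.

Lemma Pv_of_st (X s t P Q D E : C) : E = (mu - lam) + P * (1 + mu) -> E <> 0 ->
  t = (- P * (3 - X) - (1 + P) * Q) / E -> s = Q + mu * t -> D = 3 + s + t - X -> D <> 0 ->
  - (s - lam * t) / D = P.
Proof.
  intros HE HE0 Ht Hs HD HD0.
  assert (H1 : t * E = - P * (3 - X) - (1 + P) * Q) by (rewrite Ht; field; auto).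
  assert (H2 : s - lam * t + P * D = 0).
  { transitivity (t * E - (- P * (3 - X) - (1 + P) * Q));
      [rewrite HD, Hs, HE; ring | rewrite H1; ring]. }
  replace (- (s - lam * t)) with (P * D - (s - lam * t + P * D)) by ring.
  rewrite H2. field. auto.
Qed.

Lemma Pw_Phi v : Pw (Phi v) = Pv v.
Proof. apply Ci_coords_P. Qed.

Lemma Qw_Phi v : Qw (Phi v) = Qv v.
Proof. apply Ci_coords_Q. Qed.

Lemma Psi_Phi v : U0 v -> Psi (Phi v) = v.
Proof.
  intros HU. assert (HD := U0_Dv_neq_0 v HU).
  destruct HU as [[[_ HP] Hy] Hz].
  assert (HE : Ew (Phi v) <> 0).
  { apply (Cball_neq_0 _ (mu - lam)). unfold Ew. rewrite Pw_Phi.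
    replace (mu - lam + Pv v * (1 + mu) - (mu - lam)) with (Pv v * (1 + mu) - 0) by ring. auto. }
  assert (Ht : tw (Phi v) = tv v).
  { unfold tw. rewrite Pw_Phi, Qw_Phi.
    apply (tw_of_PQ _ (sv v) _ _ _ (Dv v) (Ew (Phi v))); auto.
    - unfold Pv. field. auto.
    - unfold Ew. rewrite Pw_Phi. auto. }
  assert (Hs : sw (Phi v) = sv v) by (unfold sw; rewrite Ht, Qw_Phi; unfold Qv; ring).
  destruct v as [[x y] z].
  unfold Psi. rewrite Hs, Ht. unfold sv, tv. simpl fst; simpl snd.
  rewrite !Croot_near_root_of_unity; auto; try lia;
    eapply root_of_unity_neq_0; eauto.
Qed.

Lemma Phi_Psi w : W0 w -> Phi (Psi w) = w.
Proof.
  intros HW. assert (HE := W0_Ew_neq_0 w HW).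
  destruct HW as [[[_ Hs1] Ht1] HD1].
  assert (HD : Dw w <> 0) by (apply (Cball_neq_0 _ 3); rewrite Cmod_RtoC_pos; lra).
  assert (Hroot : forall b c, pow_n b (j + 1) = RtoC 1 -> Cmod (c - 0) < 1 ->
            pow_n (b * Croot (j + 1) (1 + c)) (j + 1) - 1 = c).
  { intros b c Hb Hc. apply pow_n_Croot_root_of_unity; auto; try lia.
    apply Re_pos_near_1. replace (1 + c - 1) with (c - 0) by ring. auto. }
  assert (Hs : sv (Psi w) = sw w) by (apply Hroot; auto).
  assert (Ht : tv (Psi w) = tw w) by (apply Hroot; auto).
  assert (HP : Pv (Psi w) = Pw w).
  { unfold Pv. replace (Dv (Psi w)) with (Dw w) by (unfold Dv, Dw; rewrite Hs, Ht; reflexivity).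
    rewrite Hs, Ht. apply (Pv_of_st (pow_n (fst (fst w)) (j + 1)) _ _ _ (Qw w) _ (Ew w)); auto. }
  assert (HQ : Qv (Psi w) = Qw w) by (unfold Qv; rewrite Hs, Ht; unfold sw; ring).
  destruct w as [[w0 w1] w2].
  unfold Phi. rewrite HP, HQ. unfold Pw, Qw. simpl fst; simpl snd.
  rewrite Ci_coords_w1, Ci_coords_w2. reflexivity.
Qed.

Lemma holo_at_Dv v : holo_at Dv v.
Proof. unfold Dv, sv, tv, Xv. holo_tac. Qed.

Lemma holo_at_Pv v : Dv v <> 0 -> holo_at Pv v.
Proof. intros H. unfold Pv. apply holo_at_div; auto; [unfold sv, tv; holo_tac | apply holo_at_Dv]. Qed.

Lemma holo_at_Qv v : holo_at Qv v.
Proof. unfold Qv, sv, tv. holo_tac. Qed.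

Lemma holo_at_Ew w : holo_at Ew w.
Proof. unfold Ew, Pw. holo_tac. Qed.

Lemma holo_at_tw w : Ew w <> 0 -> holo_at tw w.
Proof. intros H. unfold tw. apply holo_at_div; auto; [unfold Pw, Qw; holo_tac | apply holo_at_Ew]. Qed.

Lemma holo_at_sw w : Ew w <> 0 -> holo_at sw w.
Proof.
  intros H. unfold sw. apply holo_at_plus; [unfold Qw; holo_tac|].
  apply holo_at_mult; [apply holo_at_const | apply holo_at_tw; auto].
Qed.

Lemma holo_at_Dw w : Ew w <> 0 -> holo_at Dw w.
Proof.
  intros H. unfold Dw.
  apply holo_at_minus; [|holo_tac].
  apply holo_at_plus; [apply holo_at_plus|]; auto using holo_at_const, holo_at_sw, holo_at_tw.
Qed.

Lemma holo_on_Phi : holo_on Phi U0.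
Proof.
  intros v HU. assert (HD := U0_Dv_neq_0 v HU).
  assert (HPv := holo_at_Pv v HD). assert (HQv := holo_at_Qv v).
  apply holo_at_triple; holo_tac; auto using two_neq_0.
Qed.

Lemma holo_on_Psi : holo_on Psi W0.
Proof.
  intros w HW. assert (HE := W0_Ew_neq_0 w HW).
  destruct HW as [[[_ Hs] Ht] _].
  assert (Hroot : forall c, holo_at c w -> Cmod (c w - 0) < 1 ->
            holo_at (fun v => Croot (j + 1) (1 + c v)) w).
  { intros c Hc Hc1. apply (holo_at_comp (fun v => 1 + c v)); [holo_tac; auto|].
    apply ex_derive_Croot; [lia|]. apply Re_pos_near_1.
    replace (1 + c w - 1) with (c w - 0) by ring. auto. }
  apply holo_at_triple; holo_tac; apply Hroot; auto using holo_at_sw, holo_at_tw.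
Qed.

Lemma open_U0 : open U0.
Proof.
  assert (Hb : beta <> 0) by (eapply root_of_unity_neq_0; eauto).
  assert (Hg : gamma <> 0) by (eapply root_of_unity_neq_0; eauto).
  unfold U0. repeat apply open_and_Cball_preimage.
  - apply open_Cball_preimage, holo_at_Dv.
  - intros v H. apply holo_at_mult; [apply holo_at_Pv, Dv_neq_0; auto | apply holo_at_const].
  - intros v _. holo_tac. auto.
  - intros v _. holo_tac. auto.
Qed.

Lemma open_W0 : open W0.
Proof.
  assert (HE : forall w, Cmod (Ew w - (mu - lam)) < Cmod (mu - lam) -> Ew w <> 0)
    by (intros w; apply Cball_neq_0).
  unfold W0. repeat apply open_and_Cball_preimage.
  - apply open_Cball_preimage, holo_at_Ew.
  - intros w H. apply holo_at_sw. auto.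
  - intros w [H _]. apply holo_at_tw. auto.
  - intros w [[H _] _]. apply holo_at_Dw. auto.
Qed.

Lemma Phi_q0 : Phi q0 = origin3.
Proof.
  unfold Phi, Pv, Qv, Dv, sv, tv, Xv, q0, origin3. simpl fst; simpl snd.
  rewrite Hbeta, Hgamma, pow_n_0_add_1.
  f_equal; [f_equal|]; field; apply three_neq_0.
Qed.

Lemma U0_q0 : U0 q0.
Proof.
  assert (He := eps_root_pos (j + 1) ltac:(lia)).
  assert (Hml : 0 < Cmod (mu - lam)) by (apply Cmod_gt_0; auto).
  assert (Hb : beta <> 0) by (eapply root_of_unity_neq_0; eauto).
  assert (Hg : gamma <> 0) by (eapply root_of_unity_neq_0; eauto).
  unfold U0, Pv, Dv, sv, tv, Xv, q0. simpl fst; simpl snd. rewrite Hbeta, Hgamma, pow_n_0_add_1.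
  repeat split; (replace (_ - _) with (RtoC 0) by (field; auto using three_neq_0));
    rewrite Cmod_0; lra.
Qed.

Lemma W0_origin : W0 origin3.
Proof.
  assert (Hml : 0 < Cmod (mu - lam)) by (apply Cmod_gt_0; auto).
  assert (Ht : tw origin3 = 0).
  { unfold tw, Ew, Pw, Qw, origin3. simpl fst; simpl snd. rewrite pow_n_0_add_1. field.
    replace (mu - lam + (0 + Ci * 0) * (1 + mu)) with (mu - lam) by ring. auto. }
  assert (Hs : sw origin3 = 0) by (unfold sw; rewrite Ht; unfold Qw, origin3; simpl; ring).
  unfold W0, Dw, Ew, Pw. rewrite Hs, Ht. unfold origin3. simpl fst; simpl snd.
  rewrite pow_n_0_add_1.
  repeat split; (replace (_ - _) with (RtoC 0) by ring); rewrite Cmod_0; lra.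
Qed.

Theorem germ_Aj_affine_eq : germ_Aj j affine_eq q0.
Proof.
  apply (germ_Aj_of_local_inverse j affine_eq q0 U0 W0 Phi Psi (fun v => 2 * Dv v));
    auto using open_U0, open_W0, U0_q0, Phi_q0, W0_origin, holo_on_Phi, holo_on_Psi,
      Psi_Phi, Phi_Psi.
  - intros v _. apply (holo_at_C_NormedModule (U := C3N) (fun v => 2 * Dv v)).
    holo_tac. apply holo_at_Dv.
  - intros v HU. apply Cmult_neq_0; [apply two_neq_0 | apply U0_Dv_neq_0; auto].
  - intros v HU. apply affine_eq_normal_form, U0_Dv_neq_0. auto.
Qed.

End NormalForm.

(** * The surface and its singular points *)

Lemma sum_n_zero (f : nat -> C) n : (forall a, (a <= n)%nat -> f a = 0) -> sum_n f n = RtoC 0.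
Proof.
  induction n; intros H.
  - rewrite sum_O. apply H. lia.
  - rewrite sum_Sn, IHn, H by (try intros; try apply H; lia). change (0 + 0 = RtoC 0). ring.
Qed.

Lemma sum_n_single (f : nat -> C) n p : (p <= n)%nat -> (forall a, a <> p -> f a = 0) ->
  @eq C (sum_n f n) (f p).
Proof.
  induction n; intros Hp H.
  - replace p with 0%nat by lia. rewrite sum_O. auto.
  - rewrite sum_Sn. destruct (Nat.eq_dec p (S n)) as [->|Hne].
    + rewrite sum_n_zero by (intros a Ha; apply H; lia). change (0 + f (S n) = f (S n)). ring.
    + rewrite IHn, (H (S n)) by (auto; lia). change (f p + 0 = f p). ring.
Qed.

Definition monomial_coef (p1 p2 p3 : nat) (k : C) (a b e : nat) : C :=
  if (Nat.eqb a p1 && Nat.eqb b p2 && Nat.eqb e p3)%bool then k else 0.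

Definition eval_monomial (p1 p2 p3 q : nat) (k : C) (x : C4) : C :=
  let '(x0, x1, x2, x3) := x in k * pow_n x0 p1 * pow_n x1 p2 * pow_n x2 p3 * pow_n x3 q.

Lemma hp_eval_monomial d p1 p2 p3 q k x : (p1 + p2 + p3 + q = d)%nat ->
  hp_eval d (monomial_coef p1 p2 p3 k) x = eval_monomial p1 p2 p3 q k x.
Proof.
  intros Hd. destruct x as [[[x0 x1] x2] x3]. unfold hp_eval, monomial_coef.
  assert (Hneq : forall a p, a <> p -> Nat.eqb a p = false) by (intros; apply Nat.eqb_neq; auto).
  rewrite (sum_n_single _ d p1) by (try lia; intros a Ha; apply sum_n_zero; intros b _;
    apply sum_n_zero; intros e _; rewrite Hneq by auto; destruct (_ <=? d)%nat; simpl; ring).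
  rewrite (sum_n_single _ d p2) by (try lia; intros b Hb; apply sum_n_zero; intros e _;
    rewrite Nat.eqb_refl, (Hneq b) by auto; destruct (_ <=? d)%nat; simpl; ring).
  rewrite (sum_n_single _ d p3) by (try lia; intros e He;
    rewrite !Nat.eqb_refl, (Hneq e) by auto; destruct (_ <=? d)%nat; simpl; ring).
  rewrite !Nat.eqb_refl. simpl.
  replace (p1 + p2 + p3 <=? d)%nat with true by (symmetry; apply Nat.leb_le; lia).
  replace (d - p1 - p2 - p3)%nat with q by lia. reflexivity.
Qed.

Lemma hp_eval_plus d (c c1 c2 : nat -> nat -> nat -> C) x :
  (forall a b e, c a b e = c1 a b e + c2 a b e) ->
  hp_eval d c x = hp_eval d c1 x + hp_eval d c2 x.
Proof.
  intros H. destruct x as [[[x0 x1] x2] x3]. unfold hp_eval.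
  do 3 (etransitivity; [|apply (sum_n_plus (G := C_AbelianMonoid))]; apply sum_n_ext; intro).
  rewrite H. destruct (_ <=? d)%nat;
    match goal with |- ?l = plus ?u ?v => change (@eq C l (Cplus u v)) end; ring.
Qed.

(* A monomial (p1, p2, p3, q, k) stands for k x0^p1 x1^p2 x2^p3 x3^q. *)
Definition monomial := (nat * nat * nat * nat * C)%type.

Fixpoint coef_of_monomials (l : list monomial) (a b e : nat) : C :=
  match l with
  | nil => 0
  | (p1, p2, p3, q, k) :: l' => monomial_coef p1 p2 p3 k a b e + coef_of_monomials l' a b e
  end.

Fixpoint eval_monomials (l : list monomial) (x : C4) : C :=
  match l with
  | nil => 0
  | (p1, p2, p3, q, k) :: l' => eval_monomial p1 p2 p3 q k x + eval_monomials l' x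
  end.

Fixpoint homogeneous_monomials (d : nat) (l : list monomial) : Prop :=
  match l with
  | nil => True
  | (p1, p2, p3, q, _) :: l' => (p1 + p2 + p3 + q = d)%nat /\ homogeneous_monomials d l'
  end.

Lemma hp_eval_monomials d l x : homogeneous_monomials d l ->
  hp_eval d (coef_of_monomials l) x = eval_monomials l x.
Proof.
  induction l as [|[[[[p1 p2] p3] q] k] l IH]; intros H.
  - destruct x as [[[x0 x1] x2] x3]. unfold hp_eval. simpl.
    do 3 (apply sum_n_zero; intros). destruct (_ <=? d)%nat; ring.
  - destruct H as [Hd Hl]. simpl coef_of_monomials.
    rewrite (hp_eval_plus d _ (monomial_coef p1 p2 p3 k) (coef_of_monomials l)) by auto.
    rewrite (hp_eval_monomial d p1 p2 p3 q), IH by auto. reflexivity.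
Qed.

Definition surface_monomials (m : nat) : list monomial :=
  [ (2 * m, 0, 0, 0, RtoC (-2)); (0, 2 * m, 0, 0, RtoC (-2));
    (0, 0, 2 * m, 0, RtoC (-2)); (0, 0, 0, 2 * m, RtoC (-2));
    (m, m, 0, 0, RtoC 2); (m, 0, m, 0, RtoC 2); (m, 0, 0, m, RtoC 2);
    (0, m, m, 0, RtoC 2); (0, m, 0, m, RtoC 2); (0, 0, m, m, RtoC 2) ]%nat.

Definition surface_poly (m : nat) (x : C4) : C :=
  let '(x0, x1, x2, x3) := x in
  let a := pow_n x0 m in let b := pow_n x1 m in let c := pow_n x2 m in let d := pow_n x3 m in
  -2 * (a * a + b * b + c * c + d * d) + 2 * (a * b + a * c + a * d + b * c + b * d + c * d).

Lemma hp_eval_surface m x :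
  hp_eval (2 * m) (coef_of_monomials (surface_monomials m)) x = surface_poly m x.
Proof.
  rewrite hp_eval_monomials by (simpl; repeat split; lia).
  assert (Hdouble : forall y : C, pow_n y (2 * m) = pow_n y m * pow_n y m).
  { intros y. replace (2 * m)%nat with (m + m)%nat by lia. exact (pow_n_plus y m m). }
  destruct x as [[[x0 x1] x2] x3]. unfold surface_monomials. cbn [eval_monomials].
  unfold eval_monomial, surface_poly.
  rewrite !Hdouble. change (pow_n ?y 0) with (RtoC 1).
  generalize (pow_n x0 m) (pow_n x1 m) (pow_n x2 m) (pow_n x3 m). intros a b c d.
  match goal with |- ?l = ?r => change (@eq C l r) end. ring.
Qed.

Lemma surface_monomials_coef_000 m : (1 <= m)%nat ->
  coef_of_monomials (surface_monomials m) 0 0 0 <> RtoC 0.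
Proof.
  intros Hm. unfold surface_monomials. cbn [coef_of_monomials]. unfold monomial_coef.
  rewrite (proj2 (Nat.eqb_neq 0 m)), (proj2 (Nat.eqb_neq 0 (2 * m))) by lia.
  cbn [Nat.eqb andb].
  replace (0 + (0 + (0 + (RtoC (-2) + (0 + (0 + (0 + (0 + (0 + (0 + 0))))))))))
    with (RtoC (-2)) by ring.
  apply RtoC_neq_0. lra.
Qed.

Lemma is_linear_C3_triple (f0 f1 f2 : C3 -> C) :
  is_linear (U := C3N) (V := C_NormedModule) f0 -> is_linear (U := C3N) (V := C_NormedModule) f1 ->
  is_linear (U := C3N) (V := C_NormedModule) f2 ->
  is_linear (U := C3N) (V := C3N) (fun y => (f0 y, f1 y, f2 y)).
Proof.
  intros H0 H1 H2.
  apply (is_linear_prod (T := C3N) (U := prod_NormedModule C_AbsRing C_NormedModule C_NormedModule)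
           (V := C_NormedModule)); auto.
  apply (is_linear_prod (T := C3N) (U := C_NormedModule) (V := C_NormedModule)); auto.
Qed.

Lemma germ_Aj_linear_pullback j (h g : C3 -> C) (q : C3) (pi pi' : C3 -> C3) :
  is_linear (U := C3N) (V := C3N) pi -> is_linear (U := C3N) (V := C3N) pi' ->
  (forall y, pi' (pi y) = y) -> (forall y, pi (pi' y) = y) ->
  (forall y, g y = h (pi y)) -> germ_Aj j h (pi q) -> germ_Aj j g q.
Proof.
  intros Hl Hl' E1 E2 Hg
    (U & W & Phi & Psi & u & HU & HW & Hq & HPhiq & HUW & HWU & HPhi & HPsi & Hu & Hu0 & Hh).
  assert (Hd : forall x, ex_filterdiff (U := C3N) (V := C3N) pi (locally x))
    by (intros; apply ex_filterdiff_linear; auto).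
  assert (Hd' : forall x, ex_filterdiff (U := C3N) (V := C3N) pi' (locally x))
    by (intros; apply ex_filterdiff_linear; auto).
  exists (fun y => U (pi y)), W, (fun y => Phi (pi y)), (fun w => pi' (Psi w)), (fun y => u (pi y)).
  split; [apply (open_comp pi U); auto; intros x _; apply continuous_of_ex_filterdiff_C3, Hd|].
  repeat split; auto; try rewrite E2.
  - apply HUW. auto.
  - rewrite (proj2 (HUW _ H)). auto.
  - apply HWU. auto.
  - apply HWU. auto.
  - intros x Hx. apply (ex_filterdiff_comp' (U := C3N) (V := C3N) pi Phi x); [apply Hd | apply HPhi; auto].
  - intros w Hw. apply (ex_filterdiff_comp' (U := C3N) (V := C3N) (W := C3N) Psi pi' w);
      [apply HPsi; auto | apply Hd'].
  - intros x Hx. apply (ex_filterdiff_comp' (U := C3N) (V := C3N) pi u x); [apply Hd | apply Hu; auto].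
  - intros x Hx. rewrite Hg. apply Hh. auto.
Qed.

Definition swap_xy (y : C3) : C3 := (snd (fst y), fst (fst y), snd y).
Definition rotate3 (y : C3) : C3 := (snd y, fst (fst y), snd (fst y)).
Definition rotate3_inv (y : C3) : C3 := (snd (fst y), snd y, fst (fst y)).

Lemma is_linear_swap_xy : is_linear (U := C3N) (V := C3N) swap_xy.
Proof. apply is_linear_C3_triple; auto using is_linear_C3_x, is_linear_C3_y, is_linear_C3_z. Qed.

Lemma is_linear_rotate3 : is_linear (U := C3N) (V := C3N) rotate3.
Proof. apply is_linear_C3_triple; auto using is_linear_C3_x, is_linear_C3_y, is_linear_C3_z. Qed.

Lemma is_linear_rotate3_inv : is_linear (U := C3N) (V := C3N) rotate3_inv.
Proof. apply is_linear_C3_triple; auto using is_linear_C3_x, is_linear_C3_y, is_linear_C3_z. Qed.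

Lemma swap_xy_involutive y : swap_xy (swap_xy y) = y.
Proof. destruct y as [[a b] c]. reflexivity. Qed.

Lemma rotate3_inv_rotate3 y : rotate3_inv (rotate3 y) = y.
Proof. destruct y as [[a b] c]. reflexivity. Qed.

Lemma rotate3_rotate3_inv y : rotate3 (rotate3_inv y) = y.
Proof. destruct y as [[a b] c]. reflexivity. Qed.

Lemma pow_n_RtoC_1 n : pow_n (RtoC 1) n = RtoC 1.
Proof. rewrite pow_n_RtoC, pow1. reflexivity. Qed.

Ltac surface_symmetry :=
  intros [[? ?] ?]; unfold surface_poly, affine_eq, swap_xy, rotate3, chart;
  simpl fst; simpl snd; rewrite ?pow_n_RtoC_1; cbv zeta;
  repeat match goal with |- context [pow_n ?x ?n] => generalize (pow_n x n); intro end;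
  match goal with |- ?l = ?r => change (@eq C l r) end; ring.

Lemma surface_chart3 j y : surface_poly (j + 1) (chart 3 y) = affine_eq j y.
Proof. revert y. surface_symmetry. Qed.

Lemma surface_chart3_swap_xy j y : surface_poly (j + 1) (chart 3 y) = affine_eq j (swap_xy y).
Proof. revert y. surface_symmetry. Qed.

Lemma surface_chart3_rotate3 j y : surface_poly (j + 1) (chart 3 y) = affine_eq j (rotate3 y).
Proof. revert y. surface_symmetry. Qed.

Lemma surface_chart2_rotate3 j y : surface_poly (j + 1) (chart 2 y) = affine_eq j (rotate3 y).
Proof. revert y. surface_symmetry. Qed.

Definition surface_coef (m : nat) : nat -> nat -> nat -> C := coef_of_monomials (surface_monomials m).

Lemma scal4_inv_1 (p : C4) : scal4 (/ RtoC 1) p = p.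
Proof.
  destruct p as [[[a b] c] d]. unfold scal4.
  replace (/ RtoC 1) with (RtoC 1) by (field; apply RtoC_neq_0; lra).
  f_equal; [f_equal; [f_equal|]|]; ring.
Qed.

Lemma is_Aj_point_of_chart j k (p : C4) (pi pi' : C3 -> C3) : (k <= 3)%nat -> coord4 k p = RtoC 1 ->
  is_linear (U := C3N) (V := C3N) pi -> is_linear (U := C3N) (V := C3N) pi' ->
  (forall y, pi' (pi y) = y) -> (forall y, pi (pi' y) = y) ->
  (forall y, surface_poly (j + 1) (chart k y) = affine_eq j (pi y)) ->
  germ_Aj j (affine_eq j) (pi (dechart k p)) ->
  is_Aj_point j (2 * (j + 1)) (surface_coef (j + 1)) p.
Proof.
  intros Hk Hp Hl Hl' E1 E2 Hchart Hgerm. exists k. split; [auto|].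
  rewrite Hp, scal4_inv_1. split; [apply RtoC_neq_0; lra|].
  apply (germ_Aj_linear_pullback j (affine_eq j) _ _ pi pi'); auto.
  intros y. unfold surface_coef. rewrite hp_eval_surface. auto.
Qed.

(* The m^2 points over the tangency point of the quadric with the plane {x_k = 0}. *)
Definition sing_point (m k a b : nat) : C4 :=
  match k with
  | 0%nat => (RtoC 0, zeta m a, zeta m b, RtoC 1)
  | 1%nat => (zeta m a, RtoC 0, zeta m b, RtoC 1)
  | 2%nat => (zeta m a, zeta m b, RtoC 0, RtoC 1)
  | _ => (zeta m a, zeta m b, RtoC 1, RtoC 0)
  end.

Lemma germ_Aj_at_roots_of_unity j a b :
  germ_Aj j (affine_eq j) (RtoC 0, zeta (j + 1) a, zeta (j + 1) b).
Proof.
  apply (germ_Aj_affine_eq j _ _ sixth_root sixth_root_conj);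
    auto using zeta_pow_n, sixth_roots_sum, sixth_roots_prod, sixth_roots_neq with arith.
Qed.

Lemma sing_point_Aj j k a b : (k < 4)%nat ->
  sing_point (j + 1) k a b <> zero4 /\
  is_Aj_point j (2 * (j + 1)) (surface_coef (j + 1)) (sing_point (j + 1) k a b).
Proof.
  intros Hk. split.
  { unfold sing_point, zero4, RtoC. destruct k as [|[|[|k]]]; intros H; injection H; intros; lra. }
  assert (Hid : is_linear (U := C3N) (V := C3N) (fun y => y)) by apply is_linear_id.
  assert (Hgerm := germ_Aj_at_roots_of_unity j a b).
  destruct k as [|[|[|[|k]]]]; try lia.
  - apply (is_Aj_point_of_chart j 3 _ (fun y => y) (fun y => y)); auto using surface_chart3.
  - apply (is_Aj_point_of_chart j 3 _ swap_xy swap_xy);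
      auto using is_linear_swap_xy, swap_xy_involutive, surface_chart3_swap_xy.
  - apply (is_Aj_point_of_chart j 3 _ rotate3 rotate3_inv);
      auto using is_linear_rotate3, is_linear_rotate3_inv, rotate3_inv_rotate3,
        rotate3_rotate3_inv, surface_chart3_rotate3.
  - apply (is_Aj_point_of_chart j 2 _ rotate3 rotate3_inv);
      auto using is_linear_rotate3, is_linear_rotate3_inv, rotate3_inv_rotate3,
        rotate3_rotate3_inv, surface_chart2_rotate3.
Qed.

Lemma sing_point_proj_inj m k k' a a' b b' l :
  (k < 4)%nat -> (k' < 4)%nat -> (a < m)%nat -> (a' < m)%nat -> (b < m)%nat -> (b' < m)%nat ->
  sing_point m k' a' b' = scal4 l (sing_point m k a b) -> k = k' /\ a = a' /\ b = b'.
Proof.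
  intros Hk Hk' Ha Ha' Hb Hb' H.
  assert (E0 := f_equal (coord4 0) H). assert (E1 := f_equal (coord4 1) H).
  assert (E2 := f_equal (coord4 2) H). assert (E3 := f_equal (coord4 3) H).
  clear H.
  assert (H10 : RtoC 1 <> 0) by (apply RtoC_neq_0; lra).
  (* the zero coordinate determines k, the coordinate equal to 1 forces l = 1 *)
  destruct k as [|[|[|[|k]]]]; try lia; destruct k' as [|[|[|[|k']]]]; try lia;
  cbn [sing_point scal4 coord4] in E0, E1, E2, E3;
  try rewrite Cmult_0_r in E0; try rewrite Cmult_0_r in E1;
  try rewrite Cmult_0_r in E2; try rewrite Cmult_0_r in E3;
  first [
    exfalso; match goal with
             | E : zeta _ _ = RtoC 0 |- _ => exact (zeta_neq_0 _ _ E)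
             | E : RtoC 1 = RtoC 0 |- _ => exact (H10 E)
             end
  | match goal with E : RtoC 1 = l * RtoC 1 |- _ => rewrite Cmult_1_r in E; subst l end;
    try rewrite Cmult_1_l in E0; try rewrite Cmult_1_l in E1;
    try rewrite Cmult_1_l in E2; try rewrite Cmult_1_l in E3;
    split; [lia | split; apply (zeta_inj m); auto; congruence] ].
Qed.

Definition sing_point_index (m i : nat) : C4 :=
  sing_point m (i / (m * m)) ((i mod (m * m)) / m) ((i mod (m * m)) mod m).

Lemma div_mod_square_bounds (m i : nat) : (1 <= m)%nat -> (i < 4 * (m * m))%nat ->
  (i / (m * m) < 4 /\ (i mod (m * m)) / m < m /\ (i mod (m * m)) mod m < m)%nat.
Proof.
  intros Hm Hi. assert (Hmm : (0 < m * m)%nat) by nia.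
  split; [|split].
  - apply Nat.Div0.div_lt_upper_bound. nia.
  - apply Nat.Div0.div_lt_upper_bound. apply Nat.mod_upper_bound. lia.
  - apply Nat.mod_upper_bound. lia.
Qed.

Lemma div_mod_square_inj (m i i' : nat) :
  (i / (m * m) = i' / (m * m))%nat -> ((i mod (m * m)) / m = (i' mod (m * m)) / m)%nat ->
  ((i mod (m * m)) mod m = (i' mod (m * m)) mod m)%nat -> i = i'.
Proof.
  intros H1 H2 H3.
  rewrite (Nat.div_mod_eq i (m * m)), (Nat.div_mod_eq i' (m * m)).
  rewrite (Nat.div_mod_eq (i mod (m * m)) m), (Nat.div_mod_eq (i' mod (m * m)) m).
  rewrite H1, H2, H3. reflexivity.
Qed.

Theorem mainTheorem8 :
  forall j : nat,
  exists (c : nat -> nat -> nat -> C) (p : nat -> C4),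
    hp_nonzero (2 * (j + 1)) c /\
    (forall i, (i < 4 * (j + 1) ^ 2)%nat ->
       p i <> zero4 /\ is_Aj_point j (2 * (j + 1)) c (p i)) /\
    (forall i i', (i < 4 * (j + 1) ^ 2)%nat -> (i' < 4 * (j + 1) ^ 2)%nat ->
       i <> i' -> proj_distinct (p i) (p i')).
Proof.
  intros j.
  assert (Hm : (1 <= j + 1)%nat) by lia.
  exists (surface_coef (j + 1)), (sing_point_index (j + 1)).
  rewrite Nat.pow_2_r. split; [|split].
  - exists 0%nat, 0%nat, 0%nat. split; [lia|]. apply surface_monomials_coef_000. auto.
  - intros i Hi. destruct (div_mod_square_bounds (j + 1) i Hm Hi) as (H1 & H2 & H3).
    apply sing_point_Aj. auto.
  - intros i i' Hi Hi' Hne [l Hl].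
    destruct (div_mod_square_bounds (j + 1) i Hm Hi) as (H1 & H2 & H3).
    destruct (div_mod_square_bounds (j + 1) i' Hm Hi') as (H1' & H2' & H3').
    destruct (sing_point_proj_inj _ _ _ _ _ _ _ _ H1 H1' H2 H2' H3 H3' Hl) as (E1 & E2 & E3).
    apply Hne, (div_mod_square_inj (j + 1)); auto.
Qed.
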